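(* Let $\mathcal{X}$ be a compact design space and, for $i=1,\dots,\nu$, let $\eta_i(x,\theta_i)$ be regression functions with parameters $\theta_i$ in compact sets $\Theta_i\subset\mathbb{R}^{d_i}$, such that for each $i$ the function $\eta_i(\cdot,\theta_i)$ is continuously differentiable with respect to $\theta_i\in\Theta_i$. Let $p_{i,j}\ge0$ be weights and $\overline{\theta}_i\in\Theta_i$ fixed parameter values, and let $$T_{\mathrm{P}}(\xi)=\sum_{i,j=1}^{\nu}p_{i,j}\inf_{\theta_{i,j}\in\Theta_j}\int_{\mathcal{X}}\big[\eta_i(x,\overline{\theta}_i)-\eta_j(x,\theta_{i,j})\big]^2\,\xi(dx).$$ If a design $\xi$ is not locally $T_{\mathrm{P}}$-optimal, then there exists a point $\overline{x}\in\mathcal{X}$ such that $\Psi(\overline{x},\xi)>T_{\mathrm{P}}(\xi)$.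
   Context: A design is a probability measure on $\mathcal{X}$ with finite support; a design is locally $T_{\mathrm{P}}$-optimal if it maximizes $T_{\mathrm{P}}$ over all designs on $\mathcal{X}$. For a design $\xi$ let $\Theta^*_{i,j}(\xi)=\arg\inf_{\theta_{i,j}\in\Theta_j}\int_{\mathcal{X}}[\eta_i(x,\overline{\theta}_i)-\eta_j(x,\theta_{i,j})]^2\xi(dx)$. Let $\hat\mu_{i,j}(\xi)$ ($i,j=1,\dots,\nu$) be probability measures on the sets $\Theta^*_{i,j}(\xi)$ for which the quantity $$\max_{x\in\mathcal{X}}\sum_{i,j=1}^{\nu}p_{i,j}\int_{\Theta^*_{i,j}(\xi)}\big[\eta_i(x,\overline{\theta}_i)-\eta_j(x,\theta_{i,j})\big]^2\mu_{i,j}(d\theta_{i,j})$$ attains its minimal value over all such families $(\mu_{i,j})$, and define $$\Psi(x,\xi)=\sum_{i,j=1}^{\nu}p_{i,j}\int_{\Theta^*_{i,j}(\xi)}\big[\eta_i(x,\overline{\theta}_i)-\eta_j(x,\theta_{i,j})\big]^2\hat\mu_{i,j}(\xi)(d\theta_{i,j}).$$ *)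

From HB Require Import structures.
From mathcomp Require Import all_boot all_order all_algebra.
From mathcomp Require Import all_classical all_reals all_analysis.
Unset Printing Implicit Defensive.
Import Order.TTheory GRing.Theory Num.Theory numFieldNormedType.Exports.
Local Open Scope classical_set_scope.
Local Open Scope ring_scope.

Definition paramSpace (R : realType) (n : nat) :=
  g_sigma_algebraType (@open 'rV[R]_n).

Section Design.
Variables (R : realType) (T : topologicalType).

(* A design: a finitely supported probability measure on X, given as a finite
   list of (support point, weight) pairs. *)
Definition is_design (X : set T) (s : seq (T * R)) : Prop :=
  (forall q, q \in s -> X q.1 /\ 0 <= q.2) /\ \sum_(q <- s) q.2 = 1.

Definition dint (s : seq (T * R)) (f : T -> R) : R :=
  \sum_(q <- s) q.2 * f q.1.
End Design.
Arguments is_design {R T}.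
Arguments dint {R T}.

Section TP.
Variables (R : realType) (T : topologicalType) (X : set T) (nu : nat)
  (d : 'I_nu -> nat) (Theta : forall i : 'I_nu, set 'rV[R]_(d i))
  (eta : forall i : 'I_nu, T -> 'rV[R]_(d i) -> R)
  (p : 'I_nu -> 'I_nu -> R) (thbar : forall i : 'I_nu, 'rV[R]_(d i)).

Definition loss (i j : 'I_nu) (s : seq (T * R)) (t : 'rV[R]_(d j)) : R :=
  dint s (fun x => (eta i x (thbar i) - eta j x t) ^+ 2).

Definition TP (s : seq (T * R)) : R :=
  \sum_(i < nu) \sum_(j < nu) p i j * inf [set loss i j s t | t in Theta j].

Definition locally_TP_optimal (s : seq (T * R)) : Prop :=
  is_design X s /\ forall s', is_design X s' -> TP s' <= TP s.

Definition Theta_star (i j : 'I_nu) (s : seq (T * R)) : set 'rV[R]_(d j) :=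
  [set t | Theta j t /\ loss i j s t = inf [set loss i j s t' | t' in Theta j]].

Definition meas_family := forall i j : 'I_nu, probability (paramSpace R (d j)) R.

Definition admissible (s : seq (T * R)) (mu : meas_family) : Prop :=
  forall i j : 'I_nu, mu i j (Theta_star i j s : set (paramSpace R (d j))) = 1%E.

Definition Psi_mu (s : seq (T * R)) (mu : meas_family) (x : T) : \bar R :=
  (\sum_(i < nu) \sum_(j < nu) (p i j)%:E *
     \int[mu i j]_(t in (Theta_star i j s : set (paramSpace R (d j))))
        ((eta i x (thbar i) - eta j x t) ^+ 2)%:E)%E.

Definition maxPsi (s : seq (T * R)) (mu : meas_family) : \bar R :=
  ereal_sup [set Psi_mu s mu x | x in X].

Definition is_hat_mu (s : seq (T * R)) (mu : meas_family) : Prop :=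
  admissible s mu /\
  forall mu', admissible s mu' -> (maxPsi s mu <= maxPsi s mu')%E.
End TP.
Arguments loss {R T nu d}.
Arguments TP {R T nu d}.
Arguments locally_TP_optimal {R T} X {nu d}.
Arguments Theta_star {R T nu d}.
Arguments meas_family {R nu}.
Arguments admissible {R T nu d}.
Arguments Psi_mu {R T nu d}.
Arguments maxPsi {R T} X {nu d}.
Arguments is_hat_mu {R T} X {nu d}.

(* If [Psi x <= TP xi] held at every design point [x], then [xi] would be
   optimal.  Indeed, for any design [xi'], each infimum over [Theta j] of the
   [xi']-loss is at most its average under [muhat i j], which lives on the set
   [Theta_star i j xi] of minimizers; weighting by [p i j] and exchanging these
   averages with the finite sum over the support of [xi'] gives
   [TP xi' <= sum_x xi'(x) Psi x <= TP xi]. *)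
From HB Require Import structures.
From mathcomp Require Import all_boot all_order all_algebra.
From mathcomp Require Import all_classical all_reals all_analysis.
From mathcomp Require Import measurable_realfun.
Import Order.TTheory GRing.Theory Num.Theory numFieldNormedType.Exports.
Local Open Scope classical_set_scope.
Local Open Scope ring_scope.

Section param_measurable.
Context {R : realType} {n : nat}.
Local Notation P := (paramSpace R n).

Lemma open_param_measurable {A : set 'rV[R]_n} : open A -> measurable (A : set P).
Proof. exact: sub_sigma_algebra. Qed.

Lemma compact_param_measurable {A : set 'rV[R]_n} :
  compact A -> measurable (A : set P).
Proof.
move=> cA; have /closed_openC/open_param_measurable/measurableC : closed A.
  exact: compact_closed.
by rewrite setCK.
Qed.

Lemma continuous_param_measurable_fun {D : set 'rV[R]_n} {f : 'rV[R]_n -> R} :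
  measurable (D : set P) -> (forall t, D t -> {for t, continuous f}) ->
  measurable_fun (D : set P) f.
Proof.
move=> mD cf; apply: (measurability _ (RGenOpens.measurableE R)).
move=> _ [_ [a [b ->]] <-]; set U := `]a, b[%classic.
(* at points of [D] the preimage of the open [U] is a neighbourhood *)
have -> : D `&` f @^-1` U = D `&` interior (f @^-1` U).
  apply/seteqP; split=> t [Dt Ut]; split=> //; last exact: interior_subset.
  by apply: (cf t Dt); apply: open_nbhs_nbhs; split=> //; exact: interval_open.
by apply: measurableI => //; apply: open_param_measurable; exact: open_interior.
Qed.

End param_measurable.

Section design_integral.
Context {R : realType} {T : topologicalType}.
Implicit Types (s : seq (T * R)) (X : set T).

Lemma dint_ge0 {X s} {f : T -> R} :
  is_design X s -> (forall x, X x -> 0 <= f x) -> 0 <= dint s f.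
Proof.
move=> [s_in _] f0; rewrite /dint big_seq; apply: sumr_ge0 => q /s_in[Xq q0].
exact/mulr_ge0/f0.
Qed.

Lemma dint_continuous {U : topologicalType} s (g : T -> U -> R) (u : U) :
  (forall q, q \in s -> {for u, continuous (g q.1)}) ->
  {for u, continuous (fun v => dint s (g^~ v))}.
Proof.
move=> gc; rewrite /prop_for /continuous_at /dint big_seq.
have -> : (fun v => \sum_(q <- s) q.2 * g q.1 v) =
          (fun v => \sum_(q <- s | q \in s) q.2 * g q.1 v).
  by apply: funext => v; rewrite big_seq.
apply: cvg_big => [|q /gc]; first exact: add_continuous.
by apply: continuousM; first exact: cst_continuous.
Qed.

Lemma sum_design_le {X s} {F : T -> \bar R} {c : R} :
  is_design X s -> (forall x, X x -> (F x <= c%:E)%E) ->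
  (\sum_(q <- s) q.2%:E * F q.1 <= c%:E)%E.
Proof.
move=> [s_in s1] Fc; rewrite -[c]mul1r -s1 mulr_suml -sumEFin !big_seq.
apply: lee_sum => q /s_in[Xq q0]; rewrite EFinM.
by apply: lee_wpmul2l; [rewrite lee_fin | exact: Fc].
Qed.

Lemma integral_dint {dm} {V : measurableType dm} (mu : {measure set V -> \bar R})
    {D : set V} {X s} (g : T -> V -> R) :
  measurable D -> is_design X s ->
  (forall x, X x -> measurable_fun D (g x)) ->
  (forall x t, X x -> D t -> 0 <= g x t) ->
  (\int[mu]_(t in D) (dint s (g^~ t))%:E =
   \sum_(q <- s) q.2%:E * \int[mu]_(t in D) (g q.1 t)%:E)%E.
Proof.
move=> mD [s_in _] mg g0.
(* restricting the summands to the support of [s] makes them all measurable *)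
pose h q t := if q \in s then (q.2 * g q.1 t)%:E else 0%E.
transitivity (\int[mu]_(t in D) \sum_(q <- s) h q t)%E.
  apply: eq_integral => t _; rewrite /dint -sumEFin !big_seq.
  by apply: eq_bigr => q qs; rewrite /h qs.
rewrite ge0_integral_sum //; last first.
- move=> q t Dt; rewrite /h; case qs: (q \in s) => //.
  by have [Xq q0] := s_in q qs; rewrite lee_fin; exact/mulr_ge0/g0.
- move=> q; rewrite /h; case qs: (q \in s); last exact: measurable_cst.
  have [Xq _] := s_in q qs; apply/measurable_EFinP/measurable_funM => //.
  exact: mg.
rewrite !big_seq; apply: eq_bigr => q qs; have [Xq q0] := s_in q qs.
rewrite -ge0_integralZl //; last by move=> t Dt; rewrite lee_fin g0.
- by apply: eq_integral => t _; rewrite /h qs EFinM.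
- exact/measurable_EFinP/mg.
Qed.

End design_integral.

Lemma inf_le_integral {R : realType} {dm} {V : measurableType dm}
    (mu : {measure set V -> \bar R}) (D A : set V) (f : V -> R) :
  measurable D -> mu D = 1%E -> D `<=` A -> A !=set0 ->
  lbound (f @` A) 0 -> measurable_fun D f ->
  ((inf (f @` A))%:E <= \int[mu]_(t in D) (f t)%:E)%E.
Proof.
move=> mD muD1 DA [a Aa] f0 mf.
have inf0 : 0 <= inf (f @` A) by apply: lb_le_inf => //; exists (f a), a.
rewrite -[X in (X <= _)%E]mule1 -muD1 -integral_cst //.
apply: ge0_le_integral => //; first exact/measurable_EFinP.
by move=> t /DA At; rewrite lee_fin; apply: ge_inf; [exists 0 | exists t].
Qed.

Section TP_bound.
Context {R : realType} {T : topologicalType} {X : set T} {nu : nat}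
  {d : 'I_nu -> nat} {Theta : forall i : 'I_nu, set 'rV[R]_(d i)}
  {eta : forall i : 'I_nu, T -> 'rV[R]_(d i) -> R}
  {p : 'I_nu -> 'I_nu -> R} {thbar : forall i : 'I_nu, 'rV[R]_(d i)}.
Hypothesis Theta_compact : forall i, compact (Theta i).
Hypothesis eta_continuous :
  forall i x, X x -> forall t, Theta i t -> {for t, continuous (eta i x)}.
Hypothesis p_ge0 : forall i j, 0 <= p i j.
Hypothesis thbar_in : forall i, Theta i (thbar i).

Local Notation loss := (loss eta thbar).
Local Notation Theta_star := (Theta_star Theta eta thbar).
Local Notation sqdev i j x t := ((eta i x (thbar i) - eta j x t) ^+ 2).

Lemma sqdev_continuous i j x t : X x -> Theta j t ->
  {for t, continuous (fun t' => sqdev i j x t')}.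
Proof.
move=> Xx Tt; have etac := eta_continuous j x Xx t Tt.
by apply: continuousM; apply: continuousB => //; exact: cst_continuous.
Qed.

Lemma loss_continuous i j s t : is_design X s -> Theta j t ->
  {for t, continuous (loss i j s)}.
Proof.
move=> [s_in _] Tt; apply: (dint_continuous s (fun x t' => sqdev i j x t')).
by move=> q /s_in[Xq _]; exact: sqdev_continuous.
Qed.

Lemma measurable_Theta_star i j {s} : is_design X s ->
  measurable (Theta_star i j s : set (paramSpace R (d j))).
Proof.
move=> ds; have mT := compact_param_measurable (Theta_compact j).
have -> : Theta_star i j s =
    Theta j `&` loss i j s @^-1` [set inf [set loss i j s t | t in Theta j]].
  by apply/seteqP; split=> t [].
have mloss : measurable_fun (Theta j : set (paramSpace R (d j))) (loss i j s).
  by apply: continuous_param_measurable_fun => // t; exact: loss_continuous.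
exact: mloss mT _ (measurable_set1 _).
Qed.

Lemma inf_loss_le_integral i j xi s (mu : probability (paramSpace R (d j)) R) :
  is_design X xi -> is_design X s ->
  mu (Theta_star i j xi : set (paramSpace R (d j))) = 1%E ->
  ((inf [set loss i j s t | t in Theta j])%:E <=
   \sum_(q <- s) q.2%:E *
     \int[mu]_(t in (Theta_star i j xi : set (paramSpace R (d j))))
       (sqdev i j q.1 t)%:E)%E.
Proof.
move=> dxi ds muD1; have mD := measurable_Theta_star i j dxi.
have DT : Theta_star i j xi `<=` Theta j by move=> t [].
rewrite -(integral_dint mu (fun x t => sqdev i j x t) mD ds); last 2 first.
- move=> x Xx; apply: continuous_param_measurable_fun => // t /DT Tt.
  exact: sqdev_continuous.
- by move=> x t _ _; exact: sqr_ge0.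
apply: inf_le_integral => //; first by exists (thbar j).
  by move=> _ [t _ <-]; apply: (dint_ge0 ds) => x _; exact: sqr_ge0.
apply: continuous_param_measurable_fun => // t /DT Tt.
exact: loss_continuous.
Qed.

Lemma TP_le_sum_Psi {xi s} {mu : meas_family d} :
  is_design X xi -> admissible Theta eta thbar xi mu -> is_design X s ->
  ((TP Theta eta p thbar s)%:E <=
   \sum_(q <- s) q.2%:E * Psi_mu Theta eta p thbar xi mu q.1)%E.
Proof.
move=> dxi adm ds; have [s_in _] := ds.
pose I (q : T * R) i j :=
  (\int[mu i j]_(t in (Theta_star i j xi : set (paramSpace R (d j))))
     (sqdev i j q.1 t)%:E)%E.
have I0 q i j : (0 <= I q i j)%E.
  by apply: integral_ge0 => t _; rewrite lee_fin sqr_ge0.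
have pI0 i j q : (0 <= (p i j)%:E * I q i j)%E by rewrite mule_ge0 ?lee_fin.
have TPij i j : ((p i j * inf [set loss i j s t | t in Theta j])%:E <=
    \sum_(q <- s | q \in s) q.2%:E * ((p i j)%:E * I q i j))%E.
  under eq_bigr do rewrite muleCA.
  rewrite -ge0_sume_distrr => [|q /s_in[_ q0]]; last by rewrite mule_ge0 ?lee_fin.
  rewrite EFinM -big_seq; apply: lee_wpmul2l; first by rewrite lee_fin.
  exact: inf_loss_le_integral.
rewrite /TP -sumEFin; under eq_bigr do rewrite -sumEFin.
apply: le_trans (lee_sum _ (fun i _ => lee_sum _ (fun j _ => TPij i j))) _.
under eq_bigr do rewrite exchange_big /=.
rewrite exchange_big big_seq /=; apply: lee_sum => q /s_in[_ q0].
rewrite /Psi_mu ge0_sume_distrr => [|i _]; last by apply: sume_ge0 => j _; exact: pI0.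
by apply: lee_sum => i _; rewrite ge0_sume_distrr => // j _; exact: pI0.
Qed.

End TP_bound.

Theorem corollary2p3 (R : realType) (T : topologicalType) (X : set T)
  (nu : nat) (d : 'I_nu -> nat) (Theta : forall i : 'I_nu, set 'rV[R]_(d i))
  (eta : forall i : 'I_nu, T -> 'rV[R]_(d i) -> R)
  (p : 'I_nu -> 'I_nu -> R) (thbar : forall i : 'I_nu, 'rV[R]_(d i)) :
  compact X ->
  (forall i, compact (Theta i)) ->
  (forall i x, X x ->
     (forall t, Theta i t -> differentiable (eta i x) t) /\
     (forall v : 'rV[R]_(d i), {within Theta i, continuous ('D_v (eta i x))})) ->
  (forall i j, 0 <= p i j) ->
  (forall i, Theta i (thbar i)) ->
  forall xi : seq (T * R), is_design X xi ->
  ~ locally_TP_optimal X Theta eta p thbar xi ->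
  forall muhat : meas_family d,
  is_hat_mu X Theta eta p thbar xi muhat ->
  exists xbar, X xbar /\
    ((TP Theta eta p thbar xi)%:E < Psi_mu Theta eta p thbar xi muhat xbar)%E.
Proof.
move=> _ Theta_compact eta_diff p_ge0 thbar_in xi dxi not_opt mu [adm _].
have eta_continuous i x : X x -> forall t, Theta i t -> {for t, continuous (eta i x)}.
  by move=> Xx t Tt; apply/differentiable_continuous/(eta_diff i x Xx).1.
apply: contrapT => Psi_le; apply: not_opt; split=> // s ds.
rewrite -lee_fin.
apply: le_trans (TP_le_sum_Psi Theta_compact eta_continuous p_ge0 thbar_in dxi adm ds) _.
apply: (sum_design_le ds) => x Xx; rewrite leNgt; apply/negP => Psi_gt.
by apply: Psi_le; exists x.
Qed.
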